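(* Let $A$ be an arbitrary endomorphism of $\mathbb{R}^n$. There exist instants $t_0<t_1$ in $\mathbb{R}$ that are conjugate for the system $v''=Av$ if and only if $A$ has real negative eigenvalues.
   Context: Two instants $t_0<t_1$ are conjugate for a second-order linear system in $\mathbb{R}^n$ if there exists a solution $v$ of the system, not identically zero, with $v(t_0)=v(t_1)=0$. *)

From HB Require Import structures.
From mathcomp Require Import all_boot all_order all_algebra.
From mathcomp Require Import all_classical all_reals all_analysis.
Set Implicit Arguments. Unset Strict Implicit. Unset Printing Implicit Defensive.
Import Order.TTheory GRing.Theory Num.Theory.
Import numFieldNormedType.Exports.
Local Open Scope ring_scope.

(* The endomorphism A of R^n is represented by a square matrix acting on
   row vectors: x |-> x *m A (MathComp's convention, matching [eigenvalue]). *)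

Definition is_solution (R : realType) (n : nat) (A : 'M[R]_n)
    (v : R -> 'rV[R]_n) : Prop :=
  (forall t : R, derivable v t 1) /\
  (forall t : R, derivable (derive1 v) t 1) /\
  (forall t : R, derive1 (derive1 v) t = v t *m A).

Definition conjugate (R : realType) (n : nat) (A : 'M[R]_n) (t0 t1 : R) : Prop :=
  t0 < t1 /\
  exists v : R -> 'rV[R]_n,
    [/\ is_solution A v, (exists t : R, v t != 0), v t0 = 0 & v t1 = 0].

From HB Require Import structures.
From mathcomp Require Import all_boot all_order all_algebra.
From mathcomp Require Import all_classical all_reals all_analysis.
From mathcomp Require Import complex ring lra zify.
Import Order.TTheory GRing.Theory Num.Theory.
Import numFieldNormedType.Exports.
Set Implicit Arguments. Unset Strict Implicit. Unset Printing Implicit Defensive.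
Local Open Scope ring_scope.

(* If [w A = a w] with [a < 0], then [t |-> sin (sqrt (- a) t) w] is a solution
   vanishing at [0] and at [pi / sqrt (- a)].
   Conversely, let [v] be a nonzero solution with [v t0 = v t1 = 0].  By uniqueness
   for the Cauchy problem (a Gronwall estimate on the energy), [v] does not vanish
   identically on ]t0, t1[, while [v char_poly(A)(A) = 0] there by Cayley-Hamilton.
   Stripping real irreducible factors off the characteristic polynomial one at a
   time yields [r] and an irreducible [f] such that [y := v r(A)] is a solution
   vanishing at [t0] and [t1], nonzero somewhere in ]t0, t1[, with [y f(A) = 0] on
   ]t0, t1[.  If [f = X - l] then [y'' = l y] there: [l < 0] is the eigenvalue
   sought, while for [l >= 0] the function [y y'], whose derivative [y'^2 + l y^2]
   is nonnegative, forces [y = 0].  If [f = (X - a)^2 + b^2] with [b != 0], a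
   similar functional of [y] and [y (A - a)] again forces [y = 0]. *)

Section ScalarCalculus.
Variable R : realType.
Implicit Types (f df : R -> R) (a b c s t : R).

Lemma is_deriveMr f (df c t : R) : is_derive t 1 f df ->
  is_derive t 1 (fun s => f s * c) (df * c).
Proof.
move=> fdf; apply: is_derive_eq (is_deriveM fdf (is_derive_cst c t 1)) _.
by rewrite scaler0 add0r mulrC.
Qed.

Lemma is_derive_sqr f (df t : R) : is_derive t 1 f df ->
  is_derive t 1 (fun s => f s ^+ 2) (2 * f t * df).
Proof. by move=> fdf; apply: is_derive_eq (is_deriveX 2 fdf) _; rewrite expr1. Qed.

Lemma is_derive_scale f (df c t : R) : is_derive (c * t) 1 f df ->
  is_derive t 1 (fun s => f (c * s)) (c * df).
Proof.
move=> fdf; rewrite mulrC; apply: (@is_derive1_comp _ f ( *%R c)) => //.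
exact: is_derive_eq (is_deriveZ c (is_derive_id t 1)) (mulr1 c).
Qed.

Section Derivative.
Variables f df : R -> R.
Hypothesis f' : forall t, is_derive t 1 f (df t).

Let derive1E' t : derive1 f t = df t.
Proof. by rewrite derive1E; have [_ ->] := f' t. Qed.

Let derivable_f t : derivable f t 1.
Proof. by have [] := f' t. Qed.

Lemma is_derive_continuous : continuous f.
Proof. by move=> t; apply/differentiable_continuous/derivable1_diffP. Qed.

Lemma is_derive_ge0_eq0 a b : f a = f b ->
  {in `]a, b[, forall t, 0 <= df t} -> {in `]a, b[, forall t, df t = 0}.
Proof.
move=> fab df_ge0 t tab.
have f'_ge0 : {in `]a, b[, forall x, 0 <= derive1 f x}.
  by move=> x /df_ge0; rewrite derive1E'.
have ndecr := @ger0_derive1_ndecr R f a b (fun x _ => @derivable_f x) f'_ge0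
  (continuous_subspaceT is_derive_continuous).
have fE : {in `]a, b[, forall u, f u = f a}.
  move=> u; rewrite in_itv /= => /andP[/ltW au /ltW ub].
  have ab := le_trans au ub.
  by apply/le_anti/andP; split; [rewrite fab|]; apply: ndecr.
rewrite -derive1E' derive1E (@near_eq_derive _ _ _ f (cst (f a))) ?derive_cst //.
by near=> u; apply: fE; near: u; exact: near_in_itvoo.
Unshelve. all: by end_near. Qed.

Lemma is_derive_eq0_itv a b : f a = 0 ->
  {in `]a, b[, forall t, df t = 0} -> {in `]a, b[, forall t, f t = 0}.
Proof.
move=> fa0 df0 t; rewrite in_itv /= => /andP[ta tb].
have [c + ] := MVT ta (fun x _ => f' x)
  (continuous_subspaceT is_derive_continuous).
rewrite in_itv /= fa0 subr0 => /andP[ac ct] ->.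
by rewrite df0 ?mul0r // in_itv /= ac (lt_trans ct).
Qed.

Hypothesis f_ge0 : forall t, 0 <= f t.

Lemma gronwall_eq0_ge K s : (forall t, `|df t| <= K * f t) -> f s = 0 ->
  forall t, s <= t -> f t = 0.
Proof.
move=> df_le fs0 t st.
pose F u := f u * expR (- K * u).
have F' (u : R) : is_derive u 1 F
    (f u * (- K * expR (- K * u)) + expR (- K * u) * df u).
  apply: is_deriveM => //; apply: is_derive_scale; exact: is_derive_expR.
have dF (x : R) : derivable F x 1 by have [] := F' x.
have : F t <= F s.
  apply: (ler0_derive1_nincr (fun u _ => dF u)) => //.
    move=> u _; rewrite derive1E; have [_ ->] := F' u.
    have := df_le u; have := f_ge0 u; have := expR_gt0 (- K * u).
    rewrite ler_norml => ? ? /andP[? ?]; nra.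
  by apply/continuous_subspaceT => x; apply/differentiable_continuous/derivable1_diffP.
rewrite /F fs0 mul0r pmulr_lle0 ?expR_gt0 // => ft_le0.
by apply/le_anti; rewrite ft_le0 f_ge0.
Qed.

End Derivative.

Lemma gronwall_eq0 f df K s : (forall t, is_derive t 1 f (df t)) ->
  (forall t, 0 <= f t) -> (forall t, `|df t| <= K * f t) -> f s = 0 ->
  forall t, f t = 0.
Proof.
move=> f' f_ge0 df_le fs0 t; have [st|/ltW ts] := leP s t.
  exact: (gronwall_eq0_ge f' f_ge0 df_le fs0).
(* On the left of [s], run the forward estimate for [u |-> f (- u)]. *)
have g' (u : R) : is_derive u 1 (fun u => f (-1 * u)) (-1 * df (-1 * u)).
  exact: is_derive_scale.
rewrite -[t]opprK -mulN1r; apply: (gronwall_eq0_ge g' _ (K := K) (s := - s)) => //.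
- by move=> u; rewrite mulN1r normrN df_le.
- by rewrite mulN1r opprK.
- by rewrite lerN2.
Qed.

End ScalarCalculus.

Section MatrixCalculus.
Variable R : realType.

Lemma is_derive_mx_entry m n (M : R -> 'M[R]_(m, n)) (dM : 'M[R]_(m, n))
    (t : R) i j :
  is_derive t 1 M dM -> is_derive t 1 (fun s => M s i j) (dM i j).
Proof.
move=> [Mt <-]; have Mijt := (derivable_mxP M t 1).1 Mt i j.
by rewrite derive_mx // mxE; exact: derivableP.
Qed.

Lemma is_derive_mx m n (M : R -> 'M[R]_(m, n)) (dM : 'M[R]_(m, n)) (t : R) :
  (forall i j, is_derive t 1 (fun s => M s i j) (dM i j)) -> is_derive t 1 M dM.
Proof.
move=> dMij; have Mt : derivable M t 1.
  by apply/derivable_mxP => i j; have [] := dMij i j.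
apply: DeriveDef => //; apply/matrixP => i j.
by rewrite derive_mx // mxE; have [_ ->] := dMij i j.
Qed.

Lemma is_derive_mulmxr m n p (M : R -> 'M[R]_(m, n)) (dM : 'M[R]_(m, n))
    (B : 'M[R]_(n, p)) (t : R) :
  is_derive t 1 M dM -> is_derive t 1 (fun s => M s *m B) (dM *m B).
Proof.
move=> MdM; apply: is_derive_mx => i j; rewrite mxE.
under eq_fun do rewrite mxE.
rewrite -(fct_sumE _ _ (fun k s => M s i k * B k j)).
apply: is_derive_sum => k; apply: is_deriveMr.
exact: is_derive_mx_entry.
Qed.

Lemma is_derive_scalemx m n (phi : R -> R) dphi (w : 'M[R]_(m, n)) (t : R) :
  is_derive t 1 phi dphi -> is_derive t 1 (fun s => phi s *: w) (dphi *: w).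
Proof.
move=> phi'; apply: is_derive_mx => i j; rewrite mxE.
by under eq_fun do rewrite mxE; exact: is_deriveMr.
Qed.

End MatrixCalculus.

Section RowSquares.
Variable R : realDomainType.

Lemma normr2M_le_sqrD (a b : R) : `|2 * a * b| <= a ^+ 2 + b ^+ 2.
Proof.
have := sqr_ge0 (a + b); have := sqr_ge0 (a - b).
by rewrite ler_norml => ? ?; apply/andP; split; nra.
Qed.

Lemma energy_derive_bound n (x y : 'rV[R]_n) (M : 'M[R]_n) :
  `|\sum_j (2 * x 0 j * y 0 j + 2 * y 0 j * (x *m M) 0 j)|
    <= (1 + \sum_i \sum_j `|M i j|) * \sum_j (x 0 j ^+ 2 + y 0 j ^+ 2).
Proof.
set E := \sum_j (x 0 j ^+ 2 + y 0 j ^+ 2).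
have sqr_le_E (u : 'rV[R]_n) i : u 0 i ^+ 2 <= \sum_j u 0 j ^+ 2.
  by rewrite (bigD1 i) //= lerDl; apply: sumr_ge0 => j _; exact: sqr_ge0.
have E_split : E = \sum_j x 0 j ^+ 2 + \sum_j y 0 j ^+ 2 by rewrite /E big_split.
rewrite big_split mulrDl mul1r (le_trans (ler_normD _ _)) // lerD //.
  rewrite (le_trans (ler_norm_sum _ _ _)) // /E.
  by apply: ler_sum => j _; exact: normr2M_le_sqrD.
rewrite exchange_big (le_trans (ler_norm_sum _ _ _)) // mulr_suml.
apply: ler_sum => j _; rewrite mxE mulr_sumr (le_trans (ler_norm_sum _ _ _)) //.
rewrite mulr_suml; apply: ler_sum => i _.
rewrite [X in `|X|](_ : _ = M i j * (2 * x 0 i * y 0 j)); last by ring.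
rewrite normrM ler_wpM2l // (le_trans (normr2M_le_sqrD _ _)) //.
by rewrite E_split lerD.
Qed.

End RowSquares.

Section Solutions.
Variables (R : realType) (n : nat) (A : 'M[R]_n).
Implicit Types (v : R -> 'rV[R]_n).

Lemma is_solution_is_derive v : is_solution A v ->
  forall t : R, is_derive t 1 v (derive1 v t) /\ is_derive t 1 (derive1 v) (v t *m A).
Proof.
case=> dv [dv' v''] t; rewrite -v'' !derive1E.
by split; exact: derivableP.
Qed.

Lemma is_derive_is_solution v (dv : R -> 'rV[R]_n) :
  (forall t : R, is_derive t 1 v (dv t)) -> (forall t : R, is_derive t 1 dv (v t *m A)) ->
  is_solution A v.
Proof.
move=> v' dv'.
have vE : derive1 v = dv by apply/funext => t; rewrite derive1E; have [_ ->] := v' t.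
split; first by move=> t; have [] := v' t.
rewrite vE; split; first by move=> t; have [] := dv' t.
by move=> t; rewrite derive1E; have [_ ->] := dv' t.
Qed.

Lemma is_solution_mulmxr v (B : 'M[R]_n) : A *m B = B *m A ->
  is_solution A v -> is_solution A (fun t => v t *m B).
Proof.
move=> AB /is_solution_is_derive v'.
apply: (@is_derive_is_solution _ (fun t => derive1 v t *m B)) => t.
  by apply: is_derive_mulmxr; have [] := v' t.
by rewrite -mulmxA -AB mulmxA; apply: is_derive_mulmxr; have [] := v' t.
Qed.

Lemma is_solution_scale_eigen (w : 'rV[R]_n) (a : R) (phi dphi : R -> R) :
  w *m A = a *: w -> (forall t : R, is_derive t 1 phi (dphi t)) ->
  (forall t : R, is_derive t 1 dphi (a * phi t)) -> is_solution A (fun t => phi t *: w).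
Proof.
move=> wA phi' dphi'.
apply: (@is_derive_is_solution _ (fun t => dphi t *: w)) => t.
  exact: is_derive_scalemx.
by rewrite -scalemxAl wA scalerA mulrC; exact: is_derive_scalemx.
Qed.

Lemma is_solution_eq0 v s : is_solution A v -> v s = 0 -> derive1 v s = 0 ->
  forall t, v t = 0.
Proof.
move=> /is_solution_is_derive v' vs0 v's0.
pose E t := \sum_j (v t 0 j ^+ 2 + derive1 v t 0 j ^+ 2).
have E' (t : R) : is_derive t 1 E (\sum_j (2 * v t 0 j * derive1 v t 0 j
                                  + 2 * derive1 v t 0 j * (v t *m A) 0 j)).
  rewrite /E -(fct_sumE _ _ (fun j t => v t 0 j ^+ 2 + derive1 v t 0 j ^+ 2)).
  have [v't v''t] := v' t.
  by apply: is_derive_sum => j; apply: is_deriveD; apply: is_derive_sqr;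
    exact: is_derive_mx_entry.
have E_ge0 t : 0 <= E t.
  by apply: sumr_ge0 => j _; rewrite addr_ge0 ?sqr_ge0.
have Es0 : E s = 0.
  by rewrite /E vs0 v's0; apply: big1 => j _; rewrite mxE expr0n addr0.
have E0 := gronwall_eq0 E' E_ge0 (fun t => energy_derive_bound _ _ _) Es0.
move=> t; apply/rowP => j; rewrite mxE; apply/eqP; rewrite -sqrf_eq0 eq_le sqr_ge0 andbT.
rewrite -(E0 t) /E (bigD1 j) //= -addrA lerDl addr_ge0 ?sqr_ge0 //.
by apply: sumr_ge0 => i _; rewrite addr_ge0 ?sqr_ge0.
Qed.

Lemma is_solution_neq0_itv v t0 t1 t : is_solution A v -> t0 < t1 -> v t != 0 ->
  exists2 s, s \in `]t0, t1[ & v s != 0.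
Proof.
move=> vA t01 vt_neq0; apply: contrapT => v_itv0; move: vt_neq0.
have {}v_itv0 : {in `]t0, t1[, forall s, v s = 0}.
  by move=> s sI; apply: contrapT => /eqP vs_neq0; apply: v_itv0; exists s.
have mid := mid_in_itvoo t01.
rewrite (is_solution_eq0 vA (s := (t0 + t1) / 2)) ?eqxx ?v_itv0 //.
rewrite derive1E (@near_eq_derive _ _ _ v (cst 0)) ?derive_cst //.
by near=> u; apply: v_itv0; near: u; exact: near_in_itvoo.
Unshelve. all: by end_near. Qed.

Lemma is_solution_entry v j : is_solution A v ->
  (forall t : R, is_derive t 1 (fun s => v s 0 j) (derive1 v t 0 j)) /\
  (forall t : R, is_derive t 1 (fun s => derive1 v s 0 j) ((v t *m A) 0 j)).
Proof.
move=> /is_solution_is_derive v'.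
by split=> t; have [v't v''t] := v' t; exact: is_derive_mx_entry.
Qed.

End Solutions.

Section Dirichlet.
Variables (R : realType) (t0 t1 : R).
Implicit Types (g dg ddg e de dde : R -> R).

Lemma dirichlet_eq0 g dg ddg (l : R) : 0 <= l ->
  (forall t : R, is_derive t 1 g (dg t)) -> (forall t : R, is_derive t 1 dg (ddg t)) ->
  {in `]t0, t1[, forall t, ddg t = l * g t} -> g t0 = 0 -> g t1 = 0 ->
  {in `]t0, t1[, forall t, g t = 0}.
Proof.
move=> l_ge0 g' dg' ddgE gt0 gt1.
have k' (t : R) : is_derive t 1 (fun s => g s * dg s) (g t * ddg t + dg t * dg t).
  exact: is_deriveM.
have k'E : {in `]t0, t1[, forall t,
    g t * ddg t + dg t * dg t = l * g t ^+ 2 + dg t ^+ 2}.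
  by move=> t tI; rewrite ddgE //; ring.
have k'0 : {in `]t0, t1[, forall t, g t * ddg t + dg t * dg t = 0}.
  apply: (is_derive_ge0_eq0 (df := fun t => g t * ddg t + dg t * dg t) k').
    by rewrite gt0 gt1 !mul0r.
  move=> t tI; rewrite k'E //.
  by apply: addr_ge0; [exact: mulr_ge0 l_ge0 (sqr_ge0 _) | exact: sqr_ge0].
apply: (is_derive_eq0_itv g' gt0) => t tI; apply/eqP.
have := k'0 t tI; rewrite k'E // => /eqP.
have lg2_ge0 : 0 <= l * g t ^+ 2 := mulr_ge0 l_ge0 (sqr_ge0 _).
by rewrite paddr_eq0 ?sqr_ge0 // sqrf_eq0 => /andP[].
Qed.

Lemma dirichlet_pair_eq0 g dg ddg e de dde (a b : R) : b != 0 ->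
  (forall t : R, is_derive t 1 g (dg t)) -> (forall t : R, is_derive t 1 dg (ddg t)) ->
  (forall t : R, is_derive t 1 e (de t)) -> (forall t : R, is_derive t 1 de (dde t)) ->
  {in `]t0, t1[, forall t, ddg t = e t + a * g t} ->
  {in `]t0, t1[, forall t, dde t = a * e t - b ^+ 2 * g t} ->
  g t0 = 0 -> g t1 = 0 -> e t0 = 0 -> e t1 = 0 ->
  {in `]t0, t1[, forall t, g t = 0}.
Proof.
move=> b_neq0 g' dg' e' de' ddgE ddeE gt0 gt1 et0 et1.
pose s : R := `|a| + 1.
have as_gt0 : 0 < a + s by have := lerNnormlW (lexx `|a|); rewrite /s; lra.
(* The cross term [g e' - e g'] has derivative [- (b^2 g^2 + e^2)] on ]t0, t1[;
   weighted by [s], it absorbs the indefinite contribution [a (b^2 g^2 + e^2)]. *)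
pose dk t := (g t * ddg t + dg t * dg t) * b ^+ 2 + (e t * dde t + de t * de t)
  - ((g t * dde t + de t * dg t) - (e t * ddg t + dg t * de t)) * s.
have k' (t : R) : is_derive t 1
    (fun u => g u * dg u * b ^+ 2 + e u * de u - (g u * de u - e u * dg u) * s) (dk t).
  rewrite /dk; apply: is_deriveB; first apply: is_deriveD.
  - by apply: is_deriveMr; exact: is_deriveM.
  - by apply: is_deriveMr; apply: is_deriveB.
have dkE : {in `]t0, t1[, forall t, dk t =
    (b * dg t) ^+ 2 + de t ^+ 2 + (a + s) * ((b * g t) ^+ 2 + e t ^+ 2)}.
  by move=> t tI; rewrite /dk ddgE // ddeE //; ring.
have sqrD_ge0 (x y : R) : 0 <= x ^+ 2 + y ^+ 2 := addr_ge0 (sqr_ge0 x) (sqr_ge0 y).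
have dk0 : {in `]t0, t1[, forall t, dk t = 0}.
  apply: (is_derive_ge0_eq0 k'); first by rewrite gt0 gt1 et0 et1; ring.
  move=> t tI; rewrite dkE //.
  exact: addr_ge0 (sqrD_ge0 _ _) (mulr_ge0 (ltW as_gt0) (sqrD_ge0 _ _)).
move=> t tI; have /eqP := dk0 t tI.
rewrite dkE // paddr_eq0 ?sqrD_ge0 ?mulr_ge0 ?(ltW as_gt0) //.
rewrite mulf_eq0 (gt_eqF as_gt0) /=.
rewrite [X in _ && X]paddr_eq0 ?sqr_ge0 // !sqrf_eq0 mulf_eq0 (negbTE b_neq0) /=.
by move=> /andP[_ /andP[/eqP]].
Qed.

End Dirichlet.

Section RealFactor.
Variable R : rcfType.
Local Open Scope complex_scope.

(* The monic irreducible polynomials of R[X]. *)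
Definition elementary_poly (f : {poly R}) :=
  (exists l, f = 'X - l%:P) \/
  (exists a b, b != 0 /\ f = ('X - a%:P) ^+ 2 + (b ^+ 2)%:P).

Lemma map_complex_rotation_poly (a b : R) :
  map_poly (real_complex R) (('X - a%:P) ^+ 2 + (b ^+ 2)%:P) =
  ('X - (a +i* b)%:P) * ('X - (a -i* b)%:P).
Proof.
rewrite rmorphD rmorphXn rmorphB /= map_polyX !map_polyC /=.
have -> : a -i* b = a%:C - 'i * b%:C.
  by apply/eqP; rewrite eq_complex /=; apply/andP; split; apply/eqP; ring.
have -> : a +i* b = a%:C + 'i * b%:C.
  by apply/eqP; rewrite eq_complex /=; apply/andP; split; apply/eqP; ring.
have I2 : ('i%:P : {poly R[i]}) ^+ 2 = -1 by rewrite -rmorphXn sqr_i rmorphN1.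
rewrite !(rmorphB, rmorphD, rmorphN, rmorphM, rmorphXn) /=.
set I := 'i%:P in I2 *; set A := (a%:C)%:P; set B := (b%:C)%:P.
have -> : ('X - (A + I * B)) * ('X - (A - I * B)) =
  ('X - A) ^+ 2 + B ^+ 2 - B ^+ 2 * (I ^+ 2 + 1) by ring.
by rewrite I2 addNr mulr0 subr0.
Qed.

Lemma elementary_poly_dvdp (q : {poly R}) : (1 < size q)%N ->
  exists2 f, elementary_poly f & f %| q.
Proof.
move=> q_gt1; pose qC := map_poly (real_complex R) q.
have [[a b] qCab] : exists z, root qC z.
  by apply/closed_rootP; rewrite size_map_poly; case: (size q) q_gt1 => [|[]].
have [b0|b_neq0] := eqVneq b 0.
  exists ('X - a%:P); first by left; exists a.
  by move: qCab; rewrite b0 dvdp_XsubCl -(fmorph_root (real_complex R)).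
exists (('X - a%:P) ^+ 2 + (b ^+ 2)%:P); first by right; exists a, b.
rewrite -(dvdp_map (real_complex R)) map_complex_rotation_poly.
have conj_qC : map_poly conjc qC = qC.
  by rewrite -map_poly_comp; apply: eq_map_poly => x /=; rewrite oppr0.
have := @uniq_roots_dvdp _ qC [:: a +i* b; a -i* b].
rewrite big_cons big_seq1; apply.
  by rewrite /= qCab -[X in root X]conj_qC complex_root_conj /= opprK qCab.
by rewrite uniq_rootsE /= inE andbT eq_complex /= eqxx /= eq_sym eqNr.
Qed.

Lemma elementary_poly_size f : elementary_poly f -> (1 < size f)%N.
Proof.
case=> [[l ->]|[a [b [_ ->]]]]; first by rewrite size_XsubC.
rewrite size_addl size_exp_XsubC // (leq_ltn_trans (size_polyC_leq1 _)) //.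
Qed.

Lemma elementary_annihilator n (A : 'M[R]_n.+1) T (P : T -> Prop)
    (v : T -> 'rV[R]_n.+1) (q : {poly R}) :
  q != 0 -> (forall t, P t -> v t *m horner_mx A q = 0) ->
  (exists2 t, P t & v t != 0) ->
  exists r f, [/\ elementary_poly f, (exists2 t, P t & v t *m horner_mx A r != 0)
               & forall t, P t -> v t *m horner_mx A r *m horner_mx A f = 0].
Proof.
have [m] := ubnP (size q); elim: m q => // m IH q size_q q_neq0 vq0 [t Pt vt_neq0].
have [size_q1|size_q_gt1] := leqP (size q) 1.
  have := vq0 t Pt; rewrite [q]size1_polyC // horner_mx_C mul_mx_scalar => /eqP.
  rewrite scaler_eq0 (negbTE vt_neq0) orbF -polyC_eq0 -size1_polyC //.
  by rewrite (negbTE q_neq0).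
have [f f_elem f_dvd_q] := elementary_poly_dvdp size_q_gt1.
have qE : q = q %/ f * f by rewrite divpK.
have [vr0|/existsNP[u /not_implyP[Pu vru_neq0]]] :=
  pselect (forall t, P t -> v t *m horner_mx A (q %/ f) = 0).
  have size_f := elementary_poly_size f_elem.
  have r_neq0 : q %/ f != 0 by apply: contraNneq q_neq0 => r0; rewrite qE r0 mul0r.
  apply: (IH (q %/ f)) => //; last by exists t.
  have f_neq0 : f != 0 by rewrite -size_poly_gt0 (ltn_trans _ size_f).
  move: size_q size_f; rewrite {1}qE size_mul // -subn1.
  by move: (size _) (size f); lia.
exists (q %/ f), f; split => //; first by exists u => //; apply/eqP.
by move=> s Ps; rewrite -mulmxA mulmxE -rmorphM /= -qE vq0.
Qed.

End RealFactor.

Section ConjugatePoints.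
Variables (R : realType) (n : nat) (A : 'M[R]_n) (t0 t1 : R).
Implicit Types (y : R -> 'rV[R]_n).

Lemma is_solution_eigen_dirichlet y (l : R) : 0 <= l -> is_solution A y ->
  {in `]t0, t1[, forall t, y t *m A = l *: y t} -> y t0 = 0 -> y t1 = 0 ->
  {in `]t0, t1[, forall t, y t = 0}.
Proof.
move=> l_ge0 yA yAE yt0 yt1 t tI; apply/rowP => j; rewrite mxE.
have [y' y''] := is_solution_entry j yA.
apply: (dirichlet_eq0 l_ge0 y' y'' _ _ _ tI).
- by move=> u uI; rewrite yAE // mxE.
- by rewrite yt0 mxE.
- by rewrite yt1 mxE.
Qed.

Lemma is_solution_rotation_dirichlet y (a b : R) : b != 0 -> is_solution A y ->
  {in `]t0, t1[, forall t, y t *m ((A - a%:M) *m (A - a%:M) + (b ^+ 2)%:M) = 0} ->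
  y t0 = 0 -> y t1 = 0 -> {in `]t0, t1[, forall t, y t = 0}.
Proof.
move=> b_neq0 yA yfA yt0 yt1 t tI; apply/rowP => j; rewrite mxE.
pose M := A - a%:M.
have AM : A *m M = M *m A by rewrite mulmxBl mulmxBr scalar_mxC.
have zA := is_solution_mulmxr AM yA.
have [y' y''] := is_solution_entry j yA.
have [z' z''] := is_solution_entry j zA.
apply: (dirichlet_pair_eq0 (a := a) b_neq0 y' y'' z' z'' _ _ _ _ _ _ tI).
- by move=> u _; rewrite /M mulmxBr mul_mx_scalar !mxE; ring.
- move=> u uI; have /eqP := yfA u uI.
  rewrite mulmxDr mul_mx_scalar addr_eq0 mulmxA -/M => /eqP yMM.
  have MA : M *m A = M *m M + a *: M.
    by rewrite -(subrK (a%:M) A) -/M mulmxDr mul_mx_scalar.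
  by rewrite -mulmxA MA mulmxDr mulmxA yMM -scalemxAr !mxE; ring.
- by rewrite yt0 mxE.
- by rewrite yt1 mxE.
- by rewrite /= yt0 mul0mx mxE.
- by rewrite /= yt1 mul0mx mxE.
Qed.

End ConjugatePoints.

Lemma conjugate_of_neg_eigenvalue (R : realType) n (A : 'M[R]_n) (a : R) :
  a < 0 -> eigenvalue A a -> conjugate A 0 (pi / Num.sqrt (- a)).
Proof.
move=> a_lt0 /eigenvalueP[w wA w_neq0].
set c := Num.sqrt (- a).
have c_gt0 : 0 < c by rewrite sqrtr_gt0 oppr_gt0.
have c2 : c ^+ 2 = - a by rewrite sqr_sqrtr // oppr_ge0 ltW.
have cK x : c * (x / c) = x by rewrite mulrC divfK // gt_eqF.
have sin' (t : R) : is_derive t 1 (fun s => sin (c * s)) (cos (c * t) * c).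
  by rewrite mulrC; apply: is_derive_scale; exact: is_derive_sin.
have cos' (t : R) : is_derive t 1 (fun s => cos (c * s) * c) (a * sin (c * t)).
  apply: is_derive_eq (is_deriveMr c (is_derive_scale (is_derive_cos _))) _.
  by rewrite -[a]opprK -c2; ring.
split; first by rewrite divr_gt0 // pi_gt0.
exists (fun t => sin (c * t) *: w); split.
- exact: is_solution_scale_eigen wA sin' cos'.
- by exists (pi / 2 / c); rewrite cK sin_pihalf scale1r.
- by rewrite mulr0 sin0 scale0r.
- by rewrite cK sinpi scale0r.
Qed.

Lemma neg_eigenvalue_of_conjugate (R : realType) n (A : 'M[R]_n) (t0 t1 : R) :
  conjugate A t0 t1 -> exists a, a < 0 /\ eigenvalue A a.
Proof.
case=> t01 [v [vA [t vt_neq0] vt0 vt1]].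
have [s sI vs_neq0] := is_solution_neq0_itv vA t01 vt_neq0.
case: n A v vA vt0 vt1 {t vt_neq0} vs_neq0 => [|n] A v vA vt0 vt1 vs_neq0.
  by move: vs_neq0; rewrite thinmx0 eqxx.
have CH t : t \in `]t0, t1[ -> v t *m horner_mx A (char_poly A) = 0.
  by rewrite Cayley_Hamilton mulmx0.
have [r [f [f_elem [u uI yu_neq0] yf0]]] :=
  elementary_annihilator (monic_neq0 (char_poly_monic A)) CH
    (ex_intro2 _ _ s sI vs_neq0).
pose y t := v t *m horner_mx A r.
have {}yu_neq0 : y u != 0 := yu_neq0.
have yA : is_solution A y.
  by apply: is_solution_mulmxr vA; symmetry; apply: comm_horner_mx.
have yt0 : y t0 = 0 by rewrite /y vt0 mul0mx.
have yt1 : y t1 = 0 by rewrite /y vt1 mul0mx.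
case: f_elem yf0 => [[l ->]|[a [b [b_neq0 ->]]]] yf0.
  have yAE : {in `]t0, t1[, forall t, y t *m A = l *: y t}.
    move=> t tI; apply/eqP; rewrite -subr_eq0 -mul_mx_scalar -mulmxBr.
    by rewrite -(yf0 t tI) rmorphB /= horner_mx_X horner_mx_C.
  have [l_lt0|l_ge0] := ltP l 0.
    by exists l; split => //; apply/eigenvalueP; exists (y u) => //; exact: yAE.
  move: yu_neq0.
  by rewrite (is_solution_eigen_dirichlet l_ge0 yA yAE yt0 yt1 uI) eqxx.
move: yu_neq0.
rewrite (is_solution_rotation_dirichlet (a := a) b_neq0 yA _ yt0 yt1 uI) ?eqxx //.
have hf : horner_mx A (('X - a%:P) ^+ 2 + (b ^+ 2)%:P) =
    (A - a%:M) *m (A - a%:M) + (b ^+ 2)%:M.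
  by rewrite rmorphD rmorphXn rmorphB /= horner_mx_X !horner_mx_C expr2 mulmxE.
by move=> t tI; rewrite -hf /y yf0.
Qed.

Theorem lemma3p4 (R : realType) (n : nat) (A : 'M[R]_n) :
  (exists t0 t1 : R, conjugate A t0 t1) <->
  (exists a : R, a < 0 /\ eigenvalue A a).
Proof.
split=> [[t0 [t1 /neg_eigenvalue_of_conjugate //]]|[a [a_lt0 a_eig]]].
by exists 0, (pi / Num.sqrt (- a)); exact: conjugate_of_neg_eigenvalue.
Qed.
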